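(* Let $V^1$ and $V^2$ be vertex algebras with $V^1\subseteq V^2$ (i.e. $V^1$ is a vertex subalgebra of $V^2$, the inclusion being a homomorphism of vertex algebras). If $M$ is an $MZ_{0,-1}$-subspace of $V^2$, then $M\cap V^1$ is an $MZ_{0,-1}$-subspace of $V^1$.
   Context: Vertex algebras are over $\mathbb{C}$; for $u\in V$ write $Y(u,z)=\sum_{n\in\mathbb{Z}}u_nz^{-n-1}$ with $u_n\in\operatorname{End}V$. A homomorphism $f$ of vertex algebras is a linear map with $f(u_nv)=f(u)_nf(v)$ for all $u,v$, $n\in\mathbb{Z}$, and $f(\mathbf{1})=\mathbf{1}$. Iterated products are nested to the right: $v_{n_1}\cdots v_{n_t}v=v_{n_1}(\cdots(v_{n_t}v))$. For a subspace $M\subseteq V$: $r_{0,-1}(M)$ is the set of $v\in V$ for which there is $m\ge 0$ with $v_{n_1}\cdots v_{n_t}v\in M$ for all $t\ge m$ and all $n_1,\dots,n_t\in\{0,-1\}$. $lsr_{0,-1}(M)$ is the set of $v\in V$ such that for every $b\in V$ there is $m\ge0$ with $b_sv_{n_1}\cdots v_{n_t}v\in M$ for all $t\ge m$ and all $s,n_1,\dots,n_t\in\{0,-1\}$. $rsr_{0,-1}(M)$ is the set of $v\in V$ such that for every $w\in V$ there is $m\ge 0$ with $(v_{n_1}\cdots v_{n_t}v)_nw\in M$ for all $t\ge m$ and all $n,n_1,\dots,n_t\in\{0,-1\}$. $sr_{0,-1}(M)=lsr_{0,-1}(M)\cap rsr_{0,-1}(M)$. $M$ is an $MZ_{0,-1}$-subspace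 of $V$ if $r_{0,-1}(M)=sr_{0,-1}(M)$. *)

From mathcomp Require Import all_boot all_order all_algebra.
From mathcomp Require Import reals.
From mathcomp.real_closed Require Import complex.
Set Implicit Arguments. Unset Strict Implicit. Unset Printing Implicit Defensive.
Import Order.TTheory GRing.Theory Num.Theory.
Local Open Scope ring_scope.

Definition genbin (K : fieldType) (p : int) (i : nat) : K :=
  (\prod_(j < i) (p%:~R - j%:R)) / (i`!)%:R.

(* Vertex algebra axioms on a K-vector space V with vacuum [vac] and products
   [Y n u v] = u_n v  (so Y(u,z) = sum_n u_n z^{-n-1}). *)
Record is_vertex_algebra (K : fieldType) (V : lmodType K) (vac : V)
    (Y : int -> V -> V -> V) : Prop := {
  va_linl : forall n (a : K) u u' v, Y n (a *: u + u') v = a *: Y n u v + Y n u' v;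
  va_linr : forall n (a : K) u v v', Y n u (a *: v + v') = a *: Y n u v + Y n u v';
  va_trunc : forall u v, exists N : int, forall n : int, N <= n -> Y n u v = 0;
  va_vac : forall (n : int) v, Y n vac v = if n == -1 then v else 0;
  va_create : forall u, Y (-1) u vac = u /\ (forall n : int, 0 <= n -> Y n u vac = 0);
  (* Borcherds (Jacobi) identity; the sums are finite by truncation, so it is
     stated as equality of all sufficiently long partial sums *)
  va_borcherds : forall (u v w : V) (p q r : int), exists N0 : nat, forall N : nat,
    (N0 <= N)%N ->
    \sum_(i < N) genbin K p i *: Y (p + q - i%:Z) (Y (r + i%:Z) u v) w =
    \sum_(i < N) ((-1) ^+ i * genbin K r i) *:
        (Y (p + r - i%:Z) u (Y (q + i%:Z) v w)
         - (-1 : K) ^ r *: Y (q + r - i%:Z) v (Y (p + i%:Z) u w))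
}.

Definition is_va_hom (K : fieldType) (V1 V2 : lmodType K) (vac1 : V1) (vac2 : V2)
    (Y1 : int -> V1 -> V1 -> V1) (Y2 : int -> V2 -> V2 -> V2) (f : V1 -> V2) : Prop :=
  (forall (a : K) u v, f (a *: u + v) = a *: f u + f v) /\
  (forall (n : int) u v, f (Y1 n u v) = Y2 n (f u) (f v)) /\
  f vac1 = vac2.

Definition is_subspace (K : fieldType) (V : lmodType K) (M : V -> Prop) : Prop :=
  M 0 /\ (forall (a : K) u v, M u -> M v -> M (a *: u + v)).

Section R01.
Variables (K : fieldType) (V : lmodType K) (Y : int -> V -> V -> V).

Definition iprod (v : V) (ns : seq int) (w : V) : V := foldr (fun n x => Y n v x) w ns.

Definition in01 (ns : seq int) : Prop := forall n, n \in ns -> n = 0 \/ n = -1.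

Definition r01 (M : V -> Prop) (v : V) : Prop :=
  exists m : nat, forall ns, (m <= size ns)%N -> in01 ns -> M (iprod v ns v).

Definition lsr01 (M : V -> Prop) (v : V) : Prop :=
  forall b : V, exists m : nat, forall (s : int) ns, (m <= size ns)%N -> in01 ns ->
    (s = 0 \/ s = -1) -> M (Y s b (iprod v ns v)).

Definition rsr01 (M : V -> Prop) (v : V) : Prop :=
  forall w : V, exists m : nat, forall (n : int) ns, (m <= size ns)%N -> in01 ns ->
    (n = 0 \/ n = -1) -> M (Y n (iprod v ns v) w).

Definition sr01 (M : V -> Prop) (v : V) : Prop := lsr01 M v /\ rsr01 M v.

Definition MZ01 (M : V -> Prop) : Prop := forall v, r01 M v <-> sr01 M v.
End R01.

From mathcomp Require Import all_boot all_order all_algebra.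
From mathcomp Require Import reals.
From mathcomp.real_closed Require Import complex.
Set Implicit Arguments.
Unset Strict Implicit.
Unset Printing Implicit Defensive.
Import GRing.Theory.
Local Open Scope ring_scope.

(* The inclusion commutes with all products, so the nested products defining
   [r01], [lsr01] and [rsr01] at [v] in V1 are mapped to the corresponding
   products at [iota v] in V2; hence [r01] passes up to V2, where it becomes
   [sr01] by hypothesis, and [sr01] passes back down to V1 by testing only
   against elements of V1. The converse inclusion [sr01 <= r01] holds in any
   vertex algebra: take [b] to be the vacuum and [s = -1]. *)

Lemma lsr01_r01 (K : fieldType) (V : lmodType K) (vac : V)
    (Y : int -> V -> V -> V) (M : V -> Prop) (v : V) :
  is_vertex_algebra vac Y -> lsr01 Y M v -> r01 Y M v.
Proof.
move=> VA lsr_v; have [m Hm] := lsr_v vac; exists m => ns size_ns ns01.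
have := Hm (-1) ns size_ns ns01 (or_intror erefl).
by rewrite (va_vac VA) eqxx.
Qed.

Section Preimage.
Variables (K : fieldType) (V1 V2 : lmodType K).
Variables (Y1 : int -> V1 -> V1 -> V1) (Y2 : int -> V2 -> V2 -> V2).
Variables (f : V1 -> V2) (M : V2 -> Prop).
Hypothesis f_Y : forall (n : int) u v, f (Y1 n u v) = Y2 n (f u) (f v).

Lemma iprod_morph (v : V1) (ns : seq int) (w : V1) :
  f (iprod Y1 v ns w) = iprod Y2 (f v) ns (f w).
Proof. by elim: ns => [|n ns IH] //=; rewrite f_Y IH. Qed.

Lemma r01_preim (v : V1) : r01 Y1 (M \o f) v -> r01 Y2 M (f v).
Proof.
by move=> [m Hm]; exists m => ns size_ns ns01; rewrite -iprod_morph; apply: Hm.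
Qed.

Lemma lsr01_preim (v : V1) : lsr01 Y2 M (f v) -> lsr01 Y1 (M \o f) v.
Proof.
move=> lsr_fv b; have [m Hm] := lsr_fv (f b); exists m => s ns size_ns ns01 s01.
by rewrite /= f_Y iprod_morph; apply: Hm.
Qed.

Lemma rsr01_preim (v : V1) : rsr01 Y2 M (f v) -> rsr01 Y1 (M \o f) v.
Proof.
move=> rsr_fv w; have [m Hm] := rsr_fv (f w); exists m => n ns size_ns ns01 n01.
by rewrite /= f_Y iprod_morph; apply: Hm.
Qed.

Lemma sr01_preim (v : V1) : sr01 Y2 M (f v) -> sr01 Y1 (M \o f) v.
Proof. by move=> [lsr_fv rsr_fv]; split; [apply: lsr01_preim | apply: rsr01_preim]. Qed.

End Preimage.

Theorem mainTheorem7 (R : realType)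
    (V1 V2 : lmodType R[i]) (vac1 : V1) (vac2 : V2)
    (Y1 : int -> V1 -> V1 -> V1) (Y2 : int -> V2 -> V2 -> V2)
    (iota : V1 -> V2) (M : V2 -> Prop) :
  is_vertex_algebra vac1 Y1 ->
  is_vertex_algebra vac2 Y2 ->
  is_va_hom vac1 vac2 Y1 Y2 iota ->
  injective iota ->
  is_subspace M ->
  MZ01 Y2 M ->
  MZ01 Y1 (fun v => M (iota v)).
Proof.
move=> VA1 _ [_ [iota_Y _]] _ _ MZ_M v; split=> [r01_v | [lsr_v _]].
- by apply: (sr01_preim (M := M) iota_Y); apply/MZ_M; apply: r01_preim.
- exact: lsr01_r01 VA1 lsr_v.
Qed.
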